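(* Let $(M,\nabla_0)$ be a flat hom-connection with respect to a differential graded algebra $\Omega A$, with extensions $\nabla_n:\mathrm{Hom}_A(\Omega^{n+1}A,M)\to\mathrm{Hom}_A(\Omega^nA,M)$, $\nabla_n(f)(\omega)=\nabla_0(f\omega)+(-1)^{n+1}f(d\omega)$. Then: (a) $\nabla_{n-1}\circ\nabla_n=0$ for all $n\ge1$, so $\cdots\xrightarrow{\nabla_2}\mathrm{Hom}_A(\Omega^2A,M)\xrightarrow{\nabla_1}\mathrm{Hom}_A(\Omega^1A,M)\xrightarrow{\nabla_0}M$ is a chain complex; denote its homology by $H_*(A;M,\nabla_* )$ (with $\mathrm{Hom}_A(\Omega^kA,M)$ in degree $k$). (b) The right action of $\Omega A$ on $\bigoplus_{n\ge0}\mathrm{Hom}_A(\Omega^nA,M)$, $(f\omega)(\omega')=f(\omega\omega')$, descends to a right action of the cohomology $H^*(A)$ of $(\Omega A,d)$ on $H_*(A;M,\nabla_* )$, given by $[f]\cdot[\omega]=[f\omega]$.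
   Context: All algebras are associative and unital over a field $k$. $\Omega A=\bigoplus_{n\ge0}\Omega^nA$, $\Omega^0A=A$, is a differential graded algebra with degree-one differential $d$, $d^2=0$, satisfying the graded Leibniz rule. $M$ is a right $A$-module; $\mathrm{Hom}_A$ denotes right $A$-linear maps; $\mathrm{Hom}_A(\Omega^1A,M)$ is a right $A$-module via $(fa)(\omega)=f(a\omega)$; $\mathrm{Hom}_A(A,M)\cong M$. For $\omega\in\Omega^nA$ and $f\in\mathrm{Hom}_A(\Omega^{n+m}A,M)$, $f\omega\in\mathrm{Hom}_A(\Omega^mA,M)$ is $(f\omega)(\omega')=f(\omega\omega')$. A hom-connection is a $k$-linear map $\nabla_0:\mathrm{Hom}_A(\Omega^1A,M)\to M$ with $\nabla_0(fa)=\nabla_0(f)a+f(da)$ for all $f$ and $a\in A$. Its curvature is $F=\nabla_0\circ\nabla_1:\mathrm{Hom}_A(\Omega^2A,M)\to M$, and the hom-connection is called flat if $F=0$. *)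

From HB Require Import structures.
From mathcomp Require Import all_boot all_algebra.
Set Implicit Arguments. Unset Strict Implicit. Unset Printing Implicit Defensive.
Import GRing.Theory.
Local Open Scope ring_scope.

(* by conversion are handled by the transport  dcast.                        *)

Definition dcast (k : fieldType) (Om : nat -> lmodType k) (m n : nat)
  (e : m = n) (x : Om m) : Om n :=
  match e in _ = n0 return Om n0 with erefl => x end.

Definition is_dga (k : fieldType) (Om : nat -> lmodType k)
  (mul : forall n m, Om n -> Om m -> Om (n + m)%N) (one : Om 0%N)
  (d : forall n, Om n -> Om n.+1) : Prop :=
  (forall n m (x y : Om n) (z : Om m), mul _ _ (x + y) z = mul _ _ x z + mul _ _ y z) /\
  (forall n m (x : Om n) (y z : Om m), mul _ _ x (y + z) = mul _ _ x y + mul _ _ x z) /\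
  (forall n m (c : k) (x : Om n) (y : Om m), mul _ _ (c *: x) y = c *: mul _ _ x y) /\
  (forall n m (c : k) (x : Om n) (y : Om m), mul _ _ x (c *: y) = c *: mul _ _ x y) /\
  (forall n m p (x : Om n) (y : Om m) (z : Om p),
      mul _ _ (mul _ _ x y) z = dcast (addnA n m p) (mul _ _ x (mul _ _ y z))) /\
  (forall n (x : Om n), mul _ _ one x = x) /\
  (forall n (x : Om n), dcast (addn0 n) (mul _ _ x one) = x) /\
  (forall n (c : k) (x y : Om n), d n (c *: x + y) = c *: d n x + d n y) /\
  (forall n (x : Om n), d _ (d n x) = 0) /\
  (forall n m (x : Om n) (y : Om m),
     d _ (mul _ _ x y) =
     mul _ _ (d n x) y + (-1) ^+ n *: dcast (addnS n m) (mul _ _ x (d m y))).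

Definition is_rmodule (k : fieldType) (Om : nat -> lmodType k)
  (mul : forall n m, Om n -> Om m -> Om (n + m)%N) (one : Om 0%N)
  (M : lmodType k) (act : M -> Om 0%N -> M) : Prop :=
  (forall (x y : M) a, act (x + y) a = act x a + act y a) /\
  (forall (x : M) a b, act x (a + b) = act x a + act x b) /\
  (forall (c : k) (x : M) a, act (c *: x) a = c *: act x a) /\
  (forall (c : k) (x : M) a, act x (c *: a) = c *: act x a) /\
  (forall x : M, act x one = x) /\
  (forall (x : M) a b, act (act x a) b = act x (mul _ _ a b)).

Definition is_hom (k : fieldType) (Om : nat -> lmodType k)
  (mul : forall n m, Om n -> Om m -> Om (n + m)%N)
  (M : lmodType k) (act : M -> Om 0%N -> M) (n : nat) (f : Om n -> M) : Prop :=
  (forall x y : Om n, f (x + y) = f x + f y) /\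
  (forall (x : Om n) (a : Om 0%N), f (dcast (addn0 n) (mul _ _ x a)) = act (f x) a).

Definition homact (k : fieldType) (Om : nat -> lmodType k)
  (mul : forall n m, Om n -> Om m -> Om (n + m)%N) (M : lmodType k)
  (n m : nat) (f : Om (n + m)%N -> M) (w : Om n) : Om m -> M :=
  fun w' => f (mul _ _ w w').

Definition is_hom_connection (k : fieldType) (Om : nat -> lmodType k)
  (mul : forall n m, Om n -> Om m -> Om (n + m)%N)
  (d : forall n, Om n -> Om n.+1)
  (M : lmodType k) (act : M -> Om 0%N -> M) (nabla0 : (Om 1%N -> M) -> M) : Prop :=
  (forall (c : k) (f g : Om 1%N -> M), is_hom mul act f -> is_hom mul act g ->
     nabla0 (fun w => c *: f w + g w) = c *: nabla0 f + nabla0 g) /\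
  (forall (f : Om 1%N -> M) (a : Om 0%N), is_hom mul act f ->
     nabla0 (@homact _ _ mul M 0 1 f a) = act (nabla0 f) a + f (d 0%N a)).

Definition nablan (k : fieldType) (Om : nat -> lmodType k)
  (mul : forall n m, Om n -> Om m -> Om (n + m)%N)
  (d : forall n, Om n -> Om n.+1)
  (M : lmodType k) (nabla0 : (Om 1%N -> M) -> M) (n : nat) (f : Om n.+1 -> M)
  : Om n -> M :=
  fun w => nabla0 (fun w' => f (dcast (addn1 n) (mul _ _ w w')))
           + (-1) ^+ n.+1 *: f (d n w).

Arguments nablan {k Om} mul d {M} nabla0 n f _.

Definition is_flat (k : fieldType) (Om : nat -> lmodType k)
  (mul : forall n m, Om n -> Om m -> Om (n + m)%N)
  (d : forall n, Om n -> Om n.+1)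
  (M : lmodType k) (act : M -> Om 0%N -> M) (nabla0 : (Om 1%N -> M) -> M) : Prop :=
  forall f : Om 2%N -> M, is_hom mul act f -> nabla0 (nablan mul d nabla0 1 f) = 0.

(* Degree-0 term is Hom_A(A,M) (identified with M via g |-> g 1, under which
   nabla_0 viewed with values in Hom_A(A,M), a |-> nabla0(f) a, is nabla0). *)
Definition hcycle (k : fieldType) (Om : nat -> lmodType k)
  (mul : forall n m, Om n -> Om m -> Om (n + m)%N)
  (d : forall n, Om n -> Om n.+1)
  (M : lmodType k) (nabla0 : (Om 1%N -> M) -> M) (m : nat) : (Om m -> M) -> Prop :=
  match m return (Om m -> M) -> Prop with
  | 0 => fun _ => True
  | j.+1 => fun g => nablan mul d nabla0 j g = (fun _ => 0)
  end.

Definition hboundary (k : fieldType) (Om : nat -> lmodType k)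
  (mul : forall n m, Om n -> Om m -> Om (n + m)%N)
  (d : forall n, Om n -> Om n.+1)
  (M : lmodType k) (act : M -> Om 0%N -> M) (nabla0 : (Om 1%N -> M) -> M)
  (m : nat) (g : Om m -> M) : Prop :=
  exists h : Om m.+1 -> M, is_hom mul act h /\ g = nablan mul d nabla0 m h.

Definition dclosed (k : fieldType) (Om : nat -> lmodType k)
  (d : forall n, Om n -> Om n.+1) (n : nat) (w : Om n) : Prop := d n w = 0.

Definition dexact (k : fieldType) (Om : nat -> lmodType k)
  (d : forall n, Om n -> Om n.+1) (n : nat) : Om n -> Prop :=
  match n return Om n -> Prop with
  | 0 => fun w => w = 0
  | j.+1 => fun w => exists v : Om j, d j v = w
  end.

From HB Require Import structures.
From mathcomp Require Import all_boot all_algebra.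
From mathcomp Require Import boolp.
Import GRing.Theory.
Local Open Scope ring_scope.
Set Implicit Arguments. Unset Strict Implicit. Unset Printing Implicit Defensive.

(* Everything rests on one identity, the Leibniz rule of [d] pushed through
   the extensions: for [f] in degree [n + m + 1], [w] in [Omega^n A] and
   [om] in [Omega^m A],
     nabla_(n+m)(f)(w om) = nabla_m(f w)(om) + (-1)^(n+m+1) f((dw) om).
   For [m = 0] it gives the A-linearity of [nabla_n]; for [m = 1], together
   with flatness [nabla_0 o nabla_1 = 0], it gives [nabla_n o nabla_(n+1) = 0].
   For closed [w] the correction term vanishes, so [f |-> f w] commutes with
   [nabla] and maps cycles to cycles and boundaries to boundaries; for
   [w = dv] and a cycle [f] it exhibits [f w] as [+-nabla(f v)], a boundary. *)

Lemma signr_addnK (R : pzRingType) n p :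
  (-1) ^+ (n + p) * (-1) ^+ n = (-1) ^+ p :> R.
Proof. by rewrite addnC exprD -mulrA -expr2 sqrr_sign mulr1. Qed.

Section Transport.
Variables (k : fieldType) (Om : nat -> lmodType k).

Lemma eq_dcast a b (e1 e2 : a = b) (x : Om a) : dcast e1 x = dcast e2 x.
Proof. by rewrite (eq_irrelevance e1 e2). Qed.

Lemma dcast_id a (e : a = a) (x : Om a) : dcast e x = x.
Proof. by rewrite (eq_dcast e erefl). Qed.

Lemma dcast_comp a b c (e1 : a = b) (e2 : b = c) (x : Om a) :
  dcast e2 (dcast e1 x) = dcast (etrans e1 e2) x.
Proof. by case: c / e2; case: b / e1. Qed.

Lemma dcastD a b (e : a = b) (x y : Om a) : dcast e (x + y) = dcast e x + dcast e y.
Proof. by case: b / e. Qed.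

Lemma dcast0 a b (e : a = b) : dcast e (0 : Om a) = 0.
Proof. by case: b / e. Qed.

Variable mul : forall n m, Om n -> Om m -> Om (n + m)%N.

Lemma dcast_mulr a b n (e : a = b) (x : Om n) (y : Om a) :
  mul x (dcast e y) = dcast (congr1 (addn n) e) (mul x y).
Proof. by case: b / e. Qed.

End Transport.

Section HomConnection.
Variables (k : fieldType) (Om : nat -> lmodType k)
  (mul : forall n m, Om n -> Om m -> Om (n + m)%N) (one : Om 0%N)
  (d : forall n, Om n -> Om n.+1)
  (M : lmodType k) (act : M -> Om 0%N -> M) (nabla0 : (Om 1%N -> M) -> M).
Arguments d : clear implicits.
Hypothesis dgaOm : is_dga mul one d.
Hypothesis rmodM : is_rmodule mul one act.
Hypothesis connection_nabla0 : is_hom_connection mul d act nabla0.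

Local Notation hom := (is_hom mul act).
Local Notation nabla := (nablan mul d nabla0).

Lemma mulDl n m (x y : Om n) (z : Om m) : mul (x + y) z = mul x z + mul y z.
Proof. by case: dgaOm. Qed.

Lemma mulDr n m (x : Om n) (y z : Om m) : mul x (y + z) = mul x y + mul x z.
Proof. by case: dgaOm => _ []. Qed.

Lemma mulA n m p (x : Om n) (y : Om m) (z : Om p) :
  mul (mul x y) z = dcast (addnA n m p) (mul x (mul y z)).
Proof. by case: dgaOm => _ [] _ [] _ [] _ []. Qed.

Lemma mul0l n m (y : Om m) : mul (0 : Om n) y = 0.
Proof. by apply: (addrI (mul (0 : Om n) y)); rewrite -mulDl !addr0. Qed.

Lemma dD n (x y : Om n) : d n (x + y) = d n x + d n y.
Proof.
case: dgaOm => _ [] _ [] _ [] _ [] _ [] _ [] _ [] dL _.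
by have := dL n 1 x y; rewrite !scale1r.
Qed.

Lemma dK n (x : Om n) : d _ (d n x) = 0.
Proof. by case: dgaOm => _ [] _ [] _ [] _ [] _ [] _ [] _ [] _ []. Qed.

Lemma d_mul n m (x : Om n) (y : Om m) :
  d _ (mul x y) = mul (d n x) y + (-1) ^+ n *: dcast (addnS n m) (mul x (d m y)).
Proof. by case: dgaOm => _ [] _ [] _ [] _ [] _ [] _ [] _ [] _ []. Qed.

Lemma actDl (x y : M) a : act (x + y) a = act x a + act y a.
Proof. by case: rmodM. Qed.

Lemma actZ c (x : M) a : act (c *: x) a = c *: act x a.
Proof. by case: rmodM => _ [] _ []. Qed.

Lemma act0 a : act 0 a = 0.
Proof. by apply: (addrI (act 0 a)); rewrite -actDl !addr0. Qed.

Section HomLemmas.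
Variables (n : nat) (f : Om n -> M).
Hypothesis homf : hom f.

Lemma homD x y : f (x + y) = f x + f y.
Proof. by case: homf. Qed.

Lemma hom_act x a : f (dcast (addn0 n) (mul x a)) = act (f x) a.
Proof. by case: homf. Qed.

Lemma hom0 : f 0 = 0.
Proof. by apply: (addrI (f 0)); rewrite -homD !addr0. Qed.

Lemma homN x : f (- x) = - f x.
Proof. by apply: (addrI (f x)); rewrite -homD !subrr hom0. Qed.

Lemma hom_sign j x : f ((-1) ^+ j *: x) = (-1) ^+ j *: f x.
Proof.
elim: j => [|j IHj]; first by rewrite !scale1r.
by rewrite !exprS !mulN1r !scaleNr homN IHj.
Qed.

End HomLemmas.

Lemma is_hom0 n : hom (fun _ : Om n => 0).
Proof. by split=> *; rewrite ?addr0 ?act0. Qed.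

Lemma is_homZ n c (f : Om n -> M) : hom f -> hom (fun x => c *: f x).
Proof. by move=> homf; split=> [x y|x a]; rewrite ?homD ?hom_act ?scalerDr ?actZ. Qed.

Lemma is_hom_dcast a n (e : a = n) (f : Om n -> M) :
  hom f -> hom (fun x : Om a => f (dcast e x)).
Proof. by case: n / e f. Qed.

Lemma is_hom_homact n m (f : Om (n + m)%N -> M) (w : Om n) :
  hom f -> hom (homact mul f w).
Proof.
move=> homf; split=> [x y|x a]; rewrite /homact; first by rewrite mulDr homD.
rewrite -hom_act // dcast_mulr mulA dcast_comp.
by congr (f _); apply: eq_dcast.
Qed.

Lemma nabla0_lin c (f g : Om 1 -> M) : hom f -> hom g ->
  nabla0 (fun x => c *: f x + g x) = c *: nabla0 f + nabla0 g.
Proof. by case: connection_nabla0 => lin _; apply: lin. Qed.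

Lemma nabla0_act (f : Om 1 -> M) a : hom f ->
  nabla0 (@homact _ _ mul _ 0 1 f a) = act (nabla0 f) a + f (d 0%N a).
Proof. by case: connection_nabla0 => _; apply. Qed.

Lemma nabla0_0 : nabla0 (fun _ => 0) = 0.
Proof.
have := nabla0_lin 1 (@is_hom0 1) (@is_hom0 1).
under eq_fun do rewrite scaler0 addr0.
by rewrite scale1r -{1}[nabla0 _]addr0 => /addrI <-.
Qed.

Lemma nabla0Z c (f : Om 1 -> M) : hom f -> nabla0 (fun x => c *: f x) = c *: nabla0 f.
Proof.
move=> homf; rewrite -[c *: _]addr0 -nabla0_0 -nabla0_lin //; last exact: is_hom0.
by under [in RHS]eq_fun do rewrite addr0.
Qed.

Lemma nabla0D (f g : Om 1 -> M) : hom f -> hom g ->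
  nabla0 (fun x => f x + g x) = nabla0 f + nabla0 g.
Proof.
move=> homf homg; rewrite -[nabla0 f]scale1r -nabla0_lin //.
by under [in RHS]eq_fun do rewrite scale1r.
Qed.

Lemma nablanZ n c (f : Om n.+1 -> M) : hom f ->
  nabla n (fun x => c *: f x) = fun x => c *: nabla n f x.
Proof.
move=> homf; apply: funext => x; rewrite /nablan.
rewrite nabla0Z; last by apply: is_hom_homact (is_hom_dcast _ homf).
by rewrite scalerDr !scalerA mulrC.
Qed.

Lemma nablan_mul n m N (e : (n + m)%N = N) (e' : (n + m.+1)%N = N.+1)
    (f : Om N.+1 -> M) (w : Om n) (om : Om m) : hom f ->
  nabla N f (dcast e (mul w om)) =
  nabla m (homact mul (fun y => f (dcast e' y)) w) om
  + (-1) ^+ N.+1 *: f (dcast (congr1 S e) (mul (d n w) om)).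
Proof.
case: N / e e' f => e' f homf /=; rewrite /nablan /homact.
have -> : (fun x => f (dcast (addn1 (n + m)) (mul (mul w om) x))) =
          (fun x => f (dcast e' (mul w (dcast (addn1 m) (mul om x))))).
  apply: funext => x.
  by rewrite mulA dcast_mulr !dcast_comp; congr (f _); apply: eq_dcast.
have sign : (-1) ^+ (n + m).+1 * (-1) ^+ n = (-1) ^+ m.+1 :> k.
  by rewrite -addnS signr_addnK.
rewrite d_mul homD // hom_sign // scalerDr scalerA sign.
by rewrite (eq_dcast e' (addnS n m)) addrAC -!addrA.
Qed.

Lemma nablan0 (f : Om 1 -> M) a : hom f -> nabla 0 f a = act (nabla0 f) a.
Proof.
move=> homf; rewrite /nablan.
under eq_fun do rewrite dcast_id.
by rewrite nabla0_act // expr1 scaleN1r addrK.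
Qed.

Lemma is_hom_nablan n (f : Om n.+1 -> M) : hom f -> hom (nabla n f).
Proof.
move=> homf; split=> [x y|w a].
  rewrite /nablan dD homD // scalerDr addrACA -nabla0D;
    try by apply: is_hom_homact (is_hom_dcast _ homf).
  by under [in RHS]eq_fun do rewrite -homD // -dcastD -mulDl.
have homfw : hom (homact mul (fun y => f (dcast (addn1 n) y)) w).
  by apply: is_hom_homact (is_hom_dcast _ homf).
rewrite (nablan_mul _ (addn1 n)) // nablan0 // [nabla n f w]/nablan.
by rewrite actDl actZ -hom_act // (eq_dcast _ (addn0 n.+1)).
Qed.

Hypothesis flat_nabla0 : is_flat mul d act nabla0.

Lemma nablanK n (f : Om n.+2 -> M) : hom f -> nabla n (nabla n.+1 f) = fun _ => 0.
Proof.
move=> homf; apply: funext => om; rewrite {1}/nablan.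
have homfom : hom (homact mul (fun y => f (dcast (addn2 n) y)) om).
  by apply: is_hom_homact (is_hom_dcast _ homf).
have homfdom : hom (fun x => f (dcast (addn1 n.+1) (mul (d n om) x))).
  by apply: is_hom_homact (is_hom_dcast _ homf).
under eq_fun do rewrite (nablan_mul _ (addn2 n)) // (eq_dcast _ (addn1 n.+1)) addrC.
rewrite nabla0_lin //; last exact: is_hom_nablan.
rewrite flat_nabla0 // addr0 [nabla n.+1 f _]/nablan dK hom0 // scaler0 addr0.
by rewrite -scalerDl [(-1) ^+ n.+2]exprS mulN1r addNr scale0r.
Qed.

Lemma hcycle_dcast N (f : Om N -> M) p (e : p.+1 = N) :
  hcycle mul d nabla0 f -> nabla p (fun x => f (dcast e x)) = fun _ => 0.
Proof. by case: N / e f. Qed.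

Lemma homact_cycle n m (f : Om (n + m)%N -> M) (w : Om n) : hom f ->
  hcycle mul d nabla0 f -> dclosed d w -> hcycle mul d nabla0 (homact mul f w).
Proof.
case: m f => [//|m] f homf cycf closedw /=; apply: funext => om.
have := congr1 (fun g => g (mul w om)) (hcycle_dcast (esym (addnS n m)) cycf).
rewrite /= (nablan_mul (erefl _) (addnS n m)); last exact: is_hom_dcast.
rewrite closedw mul0l !dcast0 hom0 // scaler0 addr0.
by under eq_fun do rewrite dcast_comp dcast_id.
Qed.

Lemma homact_boundary n m (f : Om (n + m)%N -> M) (w : Om n) :
  hboundary mul d act nabla0 f -> dclosed d w ->
  hboundary mul d act nabla0 (homact mul f w).
Proof.
move=> [h [homh ->]] closedw.
exists (homact mul (fun y => h (dcast (addnS n m) y)) w); split.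
  exact/is_hom_homact/is_hom_dcast.
apply: funext => om; rewrite {1}/homact (nablan_mul (erefl _) (addnS n m)) //.
by rewrite closedw mul0l dcast0 hom0 // scaler0 addr0.
Qed.

Lemma homact_exact n m (f : Om (n + m)%N -> M) (w : Om n) : hom f ->
  hcycle mul d nabla0 f -> dexact d w -> hboundary mul d act nabla0 (homact mul f w).
Proof.
case: n f w => [|n] f w homf cycf exw.
  exists (fun _ => 0); split; first exact: is_hom0.
  apply: funext => om.
  by rewrite /homact /nablan exw mul0l hom0 // nabla0_0 scaler0 addr0.
have {}cycf : nabla (n + m) f = fun _ => 0 := cycf. (* [n.+1 + m] computes to [(n + m).+1] *)
case: exw => v <-{w}.
set F := homact mul (fun y => f (dcast (addnS n m) y)) v.
have homF : hom F by exact/is_hom_homact/is_hom_dcast.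
exists (fun x => (-1) ^+ (n + m) *: F x); split; first exact: is_homZ.
rewrite nablanZ //; apply: funext => om.
move: (congr1 (fun g => g (mul v om)) cycf).
rewrite /= (nablan_mul (erefl _) (addnS n m)) // dcast_id => /eqP.
rewrite addr_eq0 => /eqP ->.
have signK : (-1) ^+ (n + m) * (-1) ^+ (n + m).+1 = -1 :> k.
  by rewrite exprS mulrCA -expr2 sqrr_sign mulr1.
by rewrite scalerN scalerA signK scaleN1r opprK.
Qed.

End HomConnection.

Theorem corollary3p5 (k : fieldType) (Om : nat -> lmodType k)
  (mul : forall n m, Om n -> Om m -> Om (n + m)%N) (one : Om 0%N)
  (d : forall n, Om n -> Om n.+1)
  (M : lmodType k) (act : M -> Om 0%N -> M) (nabla0 : (Om 1%N -> M) -> M) :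
  is_dga mul one d ->
  is_rmodule mul one act ->
  is_hom_connection mul d act nabla0 ->
  is_flat mul d act nabla0 ->
  (* (a) the nabla_n are well defined and form a chain complex *)
  ((forall n (f : Om n.+1 -> M), is_hom mul act f ->
       is_hom mul act (nablan mul d nabla0 n f)) /\
   (forall (f : Om 1%N -> M) (a : Om 0%N), is_hom mul act f ->
       nablan mul d nabla0 0 f a = act (nabla0 f) a) /\
   (forall f : Om 2%N -> M, is_hom mul act f ->
       nabla0 (nablan mul d nabla0 1 f) = 0) /\
   (forall n (f : Om n.+2 -> M), (1 <= n)%N -> is_hom mul act f ->
       nablan mul d nabla0 n (nablan mul d nabla0 n.+1 f) = (fun _ => 0))) /\
  (* (b) the right action of Omega A descends to H^*(A) acting on H_*(A;M,nabla) *)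
  (forall n m (f : Om (n + m)%N -> M) (w : Om n), is_hom mul act f ->
     [/\ is_hom mul act (homact mul f w),
         hcycle mul d nabla0 f -> dclosed d w -> hcycle mul d nabla0 (homact mul f w),
         hboundary mul d act nabla0 f -> dclosed d w ->
           hboundary mul d act nabla0 (homact mul f w) &
         hcycle mul d nabla0 f -> dexact d w ->
           hboundary mul d act nabla0 (homact mul f w)]).
Proof.
move=> dgaOm rmodM conn flat; split.
  split; first by move=> n f; apply: (is_hom_nablan dgaOm rmodM conn).
  split; first by move=> f a; apply: (nablan0 conn).
  by split=> [//|n f _]; apply: (nablanK dgaOm rmodM conn flat).
move=> n m f w homf; split.
- exact (is_hom_homact dgaOm w homf).
- exact (homact_cycle dgaOm homf).
- exact (homact_boundary dgaOm (f := f) (w := w)).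
- exact (homact_exact dgaOm rmodM conn homf).
Qed.
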